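(* Let $r>1$ and integers $N\ge1$, $K>2$. Define $$\gamma_1^*(r,K,N)=N\sum_{i=N}^\infty\frac1i\left(1-\frac1r\right)^i\left(1-\frac1{K-1}\right)^i,\qquad \gamma_2^*(r,K,N)=N\sum_{i=N}^\infty\frac1i\left(1-\frac1r\right)^i.$$ Then $$\frac{\gamma_1^*(r,K,N)}{\frac{r^N-(r-1)^N}{r^{N-1}}+\gamma_1^*(r,K,N)}\le\eta(r,K,N)\le\frac{\gamma_2^*(r,K,N)}{\frac{r^N-(r-1)^N}{r^{N-1}}+\gamma_2^*(r,K,N)}.$$
   Context: Single item auction with $N$ buyers whose values are i.i.d., each taking values $0<x^1<\dots<x^K$ with probabilities $p^i>0$, $\sum_ip^i=1$. Let $z^i=(\sum_{j=1}^ip^j)^N-(\sum_{j=1}^{i-1}p^j)^N$ and reserve index $t(x,p)=\max\{i: i\in\arg\max_{1\le k\le K}x^k\sum_{j=k}^Kp^j\}$. The efficiency loss ratio of the welfare-maximizing revenue-optimal auction is $\mathrm{ELR}_N(x,p)=\sum_{i=1}^{t(x,p)-1}z^ix^i/\sum_{i=1}^Kz^ix^i$. $\eta(r,K,N)$ is the supremum of $\mathrm{ELR}_N(x,p)$ over all such $p$ and all $x$ with $0<x^1<\dots<x^K\le rx^1$. *)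

From HB Require Import structures.
From mathcomp Require Import all_boot all_order all_algebra.
From mathcomp Require Import all_classical all_reals all_analysis.
Set Implicit Arguments. Unset Strict Implicit. Unset Printing Implicit Defensive.
Import Order.TTheory GRing.Theory Num.Theory.
Local Open Scope classical_set_scope.
Local Open Scope ring_scope.

(* Values x^1 < ... < x^K and probabilities p^1..p^K are modelled by
   functions nat -> R; only the indices 1..K are used. *)
Section Auction.
Variable R : realType.

Definition zcoef (N : nat) (p : nat -> R) (i : nat) : R :=
  (\sum_(1 <= j < i.+1) p j) ^+ N - (\sum_(1 <= j < i) p j) ^+ N.

Definition rev_at (K : nat) (x p : nat -> R) (k : nat) : R :=
  x k * \sum_(k <= j < K.+1) p j.

Definition max_rev (K : nat) (x p : nat -> R) : R :=
  \big[Num.max/rev_at K x p 1]_(1 <= k < K.+1) rev_at K x p k.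

Definition reserve_index (K : nat) (x p : nat -> R) : nat :=
  (\max_(1 <= i < K.+1 | rev_at K x p i == max_rev K x p) i)%N.

Definition ELR (K N : nat) (x p : nat -> R) : R :=
  (\sum_(1 <= i < reserve_index K x p) zcoef N p i * x i) /
  (\sum_(1 <= i < K.+1) zcoef N p i * x i).

Definition admissible (r : R) (K : nat) (x p : nat -> R) : Prop :=
  [/\ (forall i, (1 <= i <= K)%N -> 0 < p i),
      \sum_(1 <= i < K.+1) p i = 1,
      0 < x 1%N,
      (forall i, (1 <= i < K)%N -> x i < x i.+1)
    & x K <= r * x 1%N].

Definition eta_sup (r : R) (K N : nat) : R :=
  sup [set e | exists x p : nat -> R, admissible r K x p /\ e = ELR K N x p].

Definition gamma_series (N : nat) (q : R) : R :=
  N%:R * limn (fun n => \sum_(N <= i < n) (i%:R)^-1 * q ^+ i).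

Definition gamma1 (r : R) (K N : nat) : R :=
  gamma_series N ((1 - r^-1) * (1 - (K.-1)%:R^-1)).

Definition gamma2 (r : R) (N : nat) : R :=
  gamma_series N (1 - r^-1).

End Auction.

From HB Require Import structures.
From mathcomp Require Import all_boot all_order all_algebra.
From mathcomp Require Import all_classical all_reals all_analysis.
From mathcomp Require Import ring lra.
Import Order.TTheory GRing.Theory Num.Theory.
Import numFieldNormedType.Exports.
Local Open Scope ring_scope.

(* Let G_i = p_1 + ... + p_(i-1) be the probability that a value lies below x_i
   (so z_i = G_(i+1)^N - G_i^N), t the reserve index and M = x_t (1 - G_t) the
   optimal revenue.  Optimality of t gives x_i (1 - G_i) <= M for every i and,
   since x_K <= r x_1, G_t <= 1 - 1/r.
   With gamma(v) := N sum_(i >= N) v^i / i one has, for 0 <= a <= b < 1,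
     (b^N - a^N) / (1 - a) <= gamma(b) - gamma(a) <= (b^N - a^N) / (1 - b),
   so the welfare z_i x_i lost below t is at most M (gamma(G_(i+1)) - gamma(G_i))
   and telescopes to at most M gamma(G_t), while the welfare kept is at least
   x_t (1 - G_t^N) = M (1 + G_t + ... + G_t^(N-1)).  As gamma(v) / (1 + v + ...
   + v^(N-1)) increases with v, evaluating at v = 1 - 1/r gives the upper bound.
   The lower bound is witnessed by the equal-revenue instance: K - 1 atoms of
   mass (1 - 1/r) / (K - 1), a top atom of mass 1/r and x_i = 1 / (1 - G_i).
   There every reserve earns revenue 1, so the reserve index is K, and the upper
   estimate on gamma increments together with convexity of v |-> v^N shows that
   the lost welfare is at least gamma(G_(K-1)) = gamma1. *)

Section PowerDifferences.
Variable R : realFieldType.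
Implicit Types a b c : R.

Lemma subrXX_bounds a b n : 0 <= a -> a <= b ->
  n%:R * a ^+ n.-1 * (b - a) <= b ^+ n - a ^+ n <= n%:R * b ^+ n.-1 * (b - a).
Proof.
move=> a0 ab; have b0 : 0 <= b := le_trans a0 ab.
have ba : 0 <= b - a by rewrite subr_ge0.
have split_exp (i : 'I_n) : n.-1 = (n.-1 - i + i)%N.
  by case: i => i /= lt_in; rewrite subnK // -ltnS prednK //; case: n lt_in.
have const_sum (e : R) : e *+ n = \sum_(i < n) e by rewrite sumr_const card_ord.
rewrite subrXX (mulrC (b - a)) !ler_wpM2r // !mulr_natl !const_sum.
all: apply: ler_sum => i _.
- by rewrite [in leRHS](split_exp i) exprD ler_wpM2l ?exprn_ge0 // lerXn2r.
- by rewrite [in leLHS](split_exp i) exprD ler_wpM2r ?exprn_ge0 // lerXn2r.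
Qed.

Lemma subrXX_convex a b c n : 0 <= a -> a <= b -> b - a <= c - b ->
  b ^+ n - a ^+ n <= c ^+ n - b ^+ n.
Proof.
move=> a0 ab step; have b0 : 0 <= b := le_trans a0 ab.
have bc : b <= c by rewrite -subr_ge0 (le_trans _ step) // subr_ge0.
have /andP[_ hi] := subrXX_bounds a b n a0 ab.
have /andP[lo _] := subrXX_bounds b c n b0 bc.
by apply: le_trans hi (le_trans _ lo); rewrite ler_wpM2l ?mulr_ge0 ?exprn_ge0.
Qed.

Lemma subrXX_succ_le a b n : 0 <= a -> a <= b ->
  n%:R * (b ^+ n.+1 - a ^+ n.+1) <= n.+1%:R * b * (b ^+ n - a ^+ n).
Proof.
move=> a0 ab; have b0 : 0 <= b := le_trans a0 ab.
have /andP[lo _] := subrXX_bounds a b n a0 ab.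
have tail : n%:R * (a ^+ n * (b - a)) <= b * (b ^+ n - a ^+ n).
  apply: le_trans (_ : a * (b ^+ n - a ^+ n) <= _); last first.
    by rewrite ler_wpM2r // subr_ge0 lerXn2r.
  case: n lo => [|n] lo; first by rewrite mul0r !expr0 subrr mulr0.
  rewrite (_ : _ * _ = a * (n.+1%:R * a ^+ n * (b - a))); last by rewrite exprS; ring.
  exact: ler_wpM2l.
have -> : b ^+ n.+1 - a ^+ n.+1 = b * (b ^+ n - a ^+ n) + a ^+ n * (b - a).
  by rewrite !exprS; ring.
rewrite [leLHS]mulrDr.
rewrite (_ : _ * b * _ = n%:R * (b * (b ^+ n - a ^+ n)) + b * (b ^+ n - a ^+ n)).
  by rewrite lerD2l.
by rewrite -natr1; ring.
Qed.

Lemma subrXX_succ_ge a b n : 0 <= a -> a <= b ->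
  n.+1%:R * a * (b ^+ n - a ^+ n) <= n%:R * (b ^+ n.+1 - a ^+ n.+1).
Proof.
move=> a0 ab; have b0 : 0 <= b := le_trans a0 ab.
have /andP[_ hi] := subrXX_bounds a b n a0 ab.
have tail : a * (b ^+ n - a ^+ n) <= n%:R * (b ^+ n * (b - a)).
  apply: le_trans (_ : b * (b ^+ n - a ^+ n) <= _).
    by rewrite ler_wpM2r // subr_ge0 lerXn2r.
  case: n hi => [|n] hi; first by rewrite !expr0 subrr mulr0 mul0r.
  rewrite (_ : _ * (_ * _) = b * (n.+1%:R * b ^+ n * (b - a))); last by rewrite exprS; ring.
  exact: ler_wpM2l.
have -> : b ^+ n.+1 - a ^+ n.+1 = a * (b ^+ n - a ^+ n) + b ^+ n * (b - a).
  by rewrite !exprS; ring.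
rewrite [leRHS]mulrDr.
rewrite (_ : _ * a * _ = n%:R * (a * (b ^+ n - a ^+ n)) + a * (b ^+ n - a ^+ n)).
  by rewrite lerD2l.
by rewrite -natr1; ring.
Qed.

Lemma le_geometric_growth (u : nat -> R) c N : 0 <= c ->
    (forall n, (N <= n)%N -> u n.+1 <= c * u n) ->
  forall k, (N <= k)%N -> u k <= c ^+ (k - N) * u N.
Proof.
move=> c0 step k /subnK <-; rewrite addnK; elim: (k - N)%N => [|m IH].
  by rewrite expr0 mul1r.
rewrite addSn exprS -mulrA; apply: le_trans (step _ (leq_addl _ _)) _.
exact: ler_wpM2l.
Qed.

Lemma ge_geometric_growth (u : nat -> R) c N : 0 <= c ->
    (forall n, (N <= n)%N -> c * u n <= u n.+1) ->
  forall k, (N <= k)%N -> c ^+ (k - N) * u N <= u k.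
Proof.
move=> c0 step k /subnK <-; rewrite addnK; elim: (k - N)%N => [|m IH].
  by rewrite expr0 mul1r.
rewrite addSn exprS -mulrA; apply: le_trans (step _ (leq_addl _ _)).
exact: ler_wpM2l.
Qed.

Lemma subrXX_divn_le a b N k : 0 <= a -> a <= b -> (0 < N <= k)%N ->
  k%:R^-1 * (b ^+ k - a ^+ k) <= b ^+ (k - N) * (N%:R^-1 * (b ^+ N - a ^+ N)).
Proof.
move=> a0 ab /andP[N0 Nk]; have b0 : 0 <= b := le_trans a0 ab.
apply: (le_geometric_growth (fun k => k%:R^-1 * (b ^+ k - a ^+ k)) b N b0 _ k Nk).
move=> n Nn /=; have n0 : 0 < n%:R :> R by rewrite ltr0n (leq_trans N0 Nn).
rewrite ler_pdivrMl ?ltr0Sn // -(ler_pM2l n0).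
rewrite (_ : _ * (_ * _) = n.+1%:R * b * (b ^+ n - a ^+ n)); last by field; rewrite gt_eqF.
exact: subrXX_succ_le.
Qed.

Lemma subrXX_divn_ge a b N k : 0 <= a -> a <= b -> (0 < N <= k)%N ->
  a ^+ (k - N) * (N%:R^-1 * (b ^+ N - a ^+ N)) <= k%:R^-1 * (b ^+ k - a ^+ k).
Proof.
move=> a0 ab /andP[N0 Nk].
apply: (ge_geometric_growth (fun k => k%:R^-1 * (b ^+ k - a ^+ k)) a N a0 _ k Nk).
move=> n Nn /=; have n0 : 0 < n%:R :> R by rewrite ltr0n (leq_trans N0 Nn).
rewrite ler_pdivlMl ?ltr0Sn // -(ler_pM2l n0).
rewrite (_ : _ * (_ * _) = n.+1%:R * a * (b ^+ n - a ^+ n)); last by field; rewrite gt_eqF.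
exact: subrXX_succ_ge.
Qed.

Lemma ler_ratio_add a b c d : 0 <= a -> 0 < b -> 0 <= c -> 0 < d ->
  a * d <= c * b -> a / (a + b) <= c / (c + d).
Proof.
move=> a0 b0 c0 d0 adcb.
by rewrite ler_pdivrMr ?ltr_wpDl // mulrAC ler_pdivlMr ?ltr_wpDl //; nra.
Qed.

End PowerDifferences.

Definition geosum {R : realType} (n : nat) (v : R) : R := \sum_(i < n) v ^+ i.

Definition gamma_partial {R : realType} (N : nat) (v : R) (n : nat) : R :=
  \sum_(N <= i < n) i%:R^-1 * v ^+ i.

Section GammaSeries.
Variable R : realType.
Implicit Types a b v w : R.

Lemma gamma_seriesE N v : gamma_series N v = N%:R * limn (gamma_partial N v).
Proof. by []. Qed.

Lemma geosum_mul_subr v n : (1 - v) * geosum n v = 1 - v ^+ n.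
Proof. by rewrite -[1 - v ^+ n]opprB subrX1 -mulNr opprB. Qed.

Lemma geosum_le v n : 0 <= v < 1 -> geosum n v <= (1 - v)^-1.
Proof.
move=> /andP[v0 v1]; have pv : 0 < 1 - v by rewrite subr_gt0.
by rewrite -(ler_pM2l pv) mulfV ?gt_eqF // geosum_mul_subr lerBlDr lerDl exprn_ge0.
Qed.

Lemma geosum_ge1 v n : (0 < n)%N -> 0 <= v -> 1 <= geosum n v.
Proof.
case: n => // n _ v0; rewrite /geosum big_ord_recl expr0 lerDl.
by rewrite sumr_ge0 // => i _; exact: exprn_ge0.
Qed.

Lemma geosum_shift N n v : \sum_(N <= k < n) v ^+ (k - N) = geosum (n - N) v.
Proof.
rewrite -[X in \sum_(X <= k < n) _]add0n big_addn /geosum big_mkord.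
by apply: eq_bigr => i _; rewrite addnK.
Qed.

Lemma nondecreasing_sum_from (F : nat -> R) N : (forall k, (N <= k)%N -> 0 <= F k) ->
  {homo (fun n => \sum_(N <= k < n) F k) : n m / (n <= m)%N >-> n <= m}.
Proof.
move=> F0; apply/nondecreasing_seqP => n /=.
have [Nn|nN] := leqP N n; first by rewrite big_nat_recr //= lerDl F0.
by rewrite !big_geq // ltnW.
Qed.

Lemma gamma_partial_le N v n : (0 < N)%N -> 0 <= v < 1 ->
  gamma_partial N v n <= (1 - v)^-1.
Proof.
move=> N0 /[dup] v01 /andP[v0 _]; apply: le_trans (geosum_le v n v01).
apply: le_trans (_ : \sum_(N <= k < n) v ^+ k <= _).
  apply: ler_sum_nat => k /andP[Nk _].
  rewrite ler_piMl ?exprn_ge0 // invf_le1 ?ler1n ?ltr0n //; exact: leq_trans Nk.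
rewrite /geosum -(big_mkord xpredT); have [Nn|nN] := leqP N n.
  by rewrite (@big_cat_nat _ _ _ N 0 n) //= lerDr sumr_ge0 // => i _; exact: exprn_ge0.
by rewrite [leLHS]big_geq ?(ltnW nN) // sumr_ge0 // => i _; exact: exprn_ge0.
Qed.

Lemma gamma_partial_nondecreasing N v : 0 <= v ->
  {homo gamma_partial N v : n m / (n <= m)%N >-> n <= m}.
Proof.
by move=> v0; apply: nondecreasing_sum_from => k _; rewrite mulr_ge0 ?invr_ge0 ?exprn_ge0.
Qed.

Lemma gamma_partial_cvg N v : (0 < N)%N -> 0 <= v < 1 -> cvgn (gamma_partial N v).
Proof.
move=> N0 /[dup] v01 /andP[v0 _].
apply: nondecreasing_is_cvgn; first exact: gamma_partial_nondecreasing.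
by exists (1 - v)^-1 => _ [n _ <-]; exact: gamma_partial_le.
Qed.

Lemma gamma_partialB N a b n : gamma_partial N b n - gamma_partial N a n =
  \sum_(N <= k < n) k%:R^-1 * (b ^+ k - a ^+ k).
Proof. by rewrite -sumrB; apply: eq_bigr => k _; rewrite mulrBr. Qed.

Lemma gamma_partialB_le N a b n : (0 < N)%N -> 0 <= a -> a <= b -> b < 1 ->
  gamma_partial N b n - gamma_partial N a n <= N%:R^-1 * (b ^+ N - a ^+ N) / (1 - b).
Proof.
move=> N0 a0 ab b1; have b0 : 0 <= b := le_trans a0 ab.
have D0 : 0 <= N%:R^-1 * (b ^+ N - a ^+ N).
  by rewrite mulr_ge0 ?invr_ge0 ?subr_ge0 ?lerXn2r.
rewrite gamma_partialB.
apply: le_trans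
  (_ : \sum_(N <= k < n) b ^+ (k - N) * (N%:R^-1 * (b ^+ N - a ^+ N)) <= _).
  by apply: ler_sum_nat => k /andP[Nk _]; apply: subrXX_divn_le; rewrite ?N0.
by rewrite -mulr_suml mulrC ler_wpM2l // geosum_shift geosum_le // b0.
Qed.

Lemma gamma_partialB_ge N a b n : (0 < N)%N -> 0 <= a -> a <= b ->
  N%:R^-1 * (b ^+ N - a ^+ N) * geosum n a <=
  gamma_partial N b (n + N) - gamma_partial N a (n + N).
Proof.
move=> N0 a0 ab; rewrite gamma_partialB.
apply: le_trans
  (_ : \sum_(N <= k < n + N) a ^+ (k - N) * (N%:R^-1 * (b ^+ N - a ^+ N)) <= _).
  by rewrite -mulr_suml mulrC geosum_shift addnK.
by apply: ler_sum_nat => k /andP[Nk _]; apply: subrXX_divn_ge; rewrite ?N0.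
Qed.

Lemma gamma_seriesB N a b : (0 < N)%N -> 0 <= a < 1 -> 0 <= b < 1 ->
  gamma_series N b - gamma_series N a =
  N%:R * limn (fun n => gamma_partial N b n - gamma_partial N a n).
Proof.
by move=> N0 a01 b01; rewrite !gamma_seriesE -mulrBr limB //; exact: gamma_partial_cvg.
Qed.

Lemma gamma_seriesB_le N a b : (0 < N)%N -> 0 <= a -> a <= b -> b < 1 ->
  gamma_series N b - gamma_series N a <= (b ^+ N - a ^+ N) / (1 - b).
Proof.
move=> N0 a0 ab b1; have b0 : 0 <= b := le_trans a0 ab.
have a1 : a < 1 := le_lt_trans ab b1.
rewrite gamma_seriesB ?a0 ?b0 //.
apply: le_trans (_ : N%:R * (N%:R^-1 * (b ^+ N - a ^+ N) / (1 - b)) <= _).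
  rewrite ler_wpM2l //; apply: limr_le.
    by apply: is_cvgB; apply: gamma_partial_cvg; rewrite ?a0 ?b0.
  by apply: nearW => n; exact: gamma_partialB_le.
by rewrite !mulrA mulfV ?mul1r // pnatr_eq0 -lt0n.
Qed.

Lemma gamma_seriesB_ge N a b : (0 < N)%N -> 0 <= a -> a <= b -> b < 1 ->
  (b ^+ N - a ^+ N) / (1 - a) <= gamma_series N b - gamma_series N a.
Proof.
move=> N0 a0 ab b1; have b0 : 0 <= b := le_trans a0 ab.
have a1 : a < 1 := le_lt_trans ab b1.
set c := N%:R^-1 * (b ^+ N - a ^+ N).
set d := fun n => gamma_partial N b n - gamma_partial N a n.
have d_cvg : cvgn d by apply: is_cvgB; apply: gamma_partial_cvg; rewrite ?a0 ?b0.
have d_nd : {homo d : n m / (n <= m)%N >-> n <= m}.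
  rewrite (_ : d = fun n => \sum_(N <= k < n) k%:R^-1 * (b ^+ k - a ^+ k)).
    apply: nondecreasing_sum_from => k _.
    by rewrite mulr_ge0 ?invr_ge0 ?subr_ge0 ?lerXn2r.
  by apply: funext => n; exact: gamma_partialB.
have geo_cvg : (series (geometric c a) @ \oo --> c / (1 - a))%classic.
  by apply: cvg_geometric_series; rewrite ger0_norm.
have lim_ge : c / (1 - a) <= limn d.
  rewrite -(cvg_lim _ geo_cvg) //; apply: limr_le; first exact: cvgP geo_cvg.
  apply: nearW => n; apply: le_trans (nondecreasing_cvgn_le d_nd d_cvg (n + N)).
  rewrite (_ : series _ n = c * geosum n a); first exact: gamma_partialB_ge.
  by rewrite /series /= /geosum big_mkord mulr_sumr.
rewrite gamma_seriesB ?a0 ?b0 //.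
apply: le_trans (_ : N%:R * (c / (1 - a)) <= _); last exact: ler_wpM2l.
by rewrite /c !mulrA mulfV ?mul1r // pnatr_eq0 -lt0n.
Qed.

Lemma gamma_series0 N : (0 < N)%N -> gamma_series N (0 : R) = 0.
Proof.
move=> N0; rewrite gamma_seriesE (_ : gamma_partial N 0 = cst 0) ?lim_cst ?mulr0 //.
apply: funext => n; rewrite /gamma_partial big_nat_cond big1 // => i /andP[/andP[Ni _] _].
by rewrite expr0n gtn_eqF ?mulr0 // (leq_trans N0 Ni).
Qed.

Lemma gamma_series_ge0 N v : (0 < N)%N -> 0 <= v -> v < 1 -> 0 <= gamma_series N v.
Proof.
move=> N0 v0 v1; have := gamma_seriesB_ge N 0 v N0 (lexx 0) v0 v1.
rewrite gamma_series0 // expr0n gtn_eqF // !subr0 divr1; apply: le_trans.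
exact: exprn_ge0.
Qed.

Lemma gamma_partial_geosum_le N v w n : 0 <= v -> v <= w ->
  gamma_partial N v n * geosum N w <= gamma_partial N w n * geosum N v.
Proof.
move=> v0 vw; have w0 : 0 <= w := le_trans v0 vw.
rewrite /gamma_partial !mulr_suml; apply: ler_sum_nat => k /andP[Nk _].
rewrite /geosum !mulr_sumr; apply: ler_sum => j _.
have jk : (j <= k)%N by apply: leq_trans (ltnW (ltn_ord j)) Nk.
rewrite -!mulrA ler_wpM2l ?invr_ge0 // -(subnK jk) !exprD.
rewrite -!mulrA [v ^+ j * _]mulrC ler_wpM2r ?mulr_ge0 ?exprn_ge0 //.
exact: lerXn2r.
Qed.

Lemma gamma_series_geosum_le N v w : (0 < N)%N -> 0 <= v -> v <= w -> w < 1 ->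
  gamma_series N v * geosum N w <= gamma_series N w * geosum N v.
Proof.
move=> N0 v0 vw w1; have w0 : 0 <= w := le_trans v0 vw.
have Pw : 0 < geosum N w := lt_le_trans ltr01 (geosum_ge1 w N N0 w0).
have Pv : 0 <= geosum N v := le_trans ler01 (geosum_ge1 v N N0 v0).
have gw_cvg : cvgn (gamma_partial N w) by apply: gamma_partial_cvg; rewrite ?w0.
rewrite !gamma_seriesE -!mulrA ler_wpM2l // -ler_pdivlMr //.
apply: limr_le; first by apply: gamma_partial_cvg; rewrite ?v0 ?(le_lt_trans vw w1).
apply: nearW => n; rewrite ler_pdivlMr //.
apply: le_trans (gamma_partial_geosum_le N v w n v0 vw) _; rewrite ler_wpM2r //.
exact: nondecreasing_cvgn_le (gamma_partial_nondecreasing N w w0) gw_cvg n.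
Qed.

End GammaSeries.

Lemma bigmax_nat_attained (m n : nat) (P : pred nat) i0 : (0 < m)%N ->
  (m <= i0 < n)%N -> P i0 ->
  (m <= \max_(m <= i < n | P i) i < n)%N && P (\max_(m <= i < n | P i) i)%N.
Proof.
move=> m0 i0_in Pi0.
have : (\max_(m <= i < n | P i) i == 0)%N ||
       ((m <= \max_(m <= i < n | P i) i < n)%N && P (\max_(m <= i < n | P i) i)%N).
  rewrite big_seq_cond; apply: (big_ind (fun y => (y == 0)%N || ((m <= y < n)%N && P y))).
  - by rewrite eqxx.
  - by move=> u v hu hv; case: (leqP u v).
  - by move=> i /andP[]; rewrite mem_index_iota => -> ->; rewrite orbT.
have le_i0 : (i0 <= \max_(m <= i < n | P i) i)%N.
  by apply: leq_bigmax_seq; rewrite ?mem_index_iota.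
case/orP=> [/eqP max0 | //]; move: le_i0; rewrite max0 leqn0 => /eqP i00.
by move: i0_in; rewrite i00 leqn0 => /andP[/eqP m_0]; rewrite m_0 in m0.
Qed.

Section ReserveIndex.
Variables (R : realType) (K : nat) (x p : nat -> R).
Hypothesis K_gt0 : (0 < K)%N.

Lemma le_max_rev k : (1 <= k <= K)%N -> rev_at K x p k <= max_rev K x p.
Proof. by move=> k_in; apply: le_bigmax_seq => //; rewrite mem_index_iota ltnS. Qed.

Lemma max_rev_attained : exists2 k, (1 <= k <= K)%N & max_rev K x p = rev_at K x p k.
Proof.
rewrite /max_rev big_seq.
apply: (big_ind (fun y => exists2 k, (1 <= k <= K)%N & y = rev_at K x p k)).
- by exists 1%N; rewrite ?lexx.
- move=> _ _ [k1 k1_in ->] [k2 k2_in ->].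
  by rewrite /Num.max; case: ifP; [exists k2 | exists k1].
- by move=> i; rewrite mem_index_iota ltnS => i_in; exists i.
Qed.

Lemma reserve_indexP :
  (1 <= reserve_index K x p <= K)%N /\ rev_at K x p (reserve_index K x p) = max_rev K x p.
Proof.
have [k k_in max_k] := max_rev_attained.
have Pk : rev_at K x p k == max_rev K x p by rewrite max_k.
have := @bigmax_nat_attained 1 K.+1 (fun i => rev_at K x p i == max_rev K x p) k isT.
by rewrite ltnS k_in => /(_ isT Pk) /andP[t_in /eqP]; rewrite -ltnS.
Qed.

Lemma leq_reserve_index k : (1 <= k <= K)%N -> rev_at K x p k = max_rev K x p ->
  (k <= reserve_index K x p)%N.
Proof.
by move=> k_in max_k; apply: leq_bigmax_seq; rewrite ?mem_index_iota ?ltnS ?max_k.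
Qed.

End ReserveIndex.

Definition cumul {R : realType} (p : nat -> R) (i : nat) : R := \sum_(1 <= j < i) p j.

Lemma zcoefE (R : realType) N (p : nat -> R) i :
  zcoef N p i = cumul p i.+1 ^+ N - cumul p i ^+ N.
Proof. by []. Qed.

Section UpperBound.
Variables (R : realType) (r : R) (K N : nat) (x p : nat -> R).
Hypotheses (r_gt1 : 1 < r) (N_gt0 : (0 < N)%N) (adm : admissible r K x p).

Local Notation G := (cumul p).
Local Notation t := (reserve_index K x p).
Local Notation M := (max_rev K x p).
Local Notation q := (1 - r^-1).

Lemma admissible_K_gt0 : (0 < K)%N.
Proof.
case: adm => _ + _ _ _; case: K => //.
by rewrite big_geq // => /eqP; rewrite eq_sym oner_eq0.
Qed.

Let t_ge1 : (1 <= t)%N. Proof. by case: (reserve_indexP _ _ x p admissible_K_gt0) => /andP[]. Qed.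
Let t_le : (t <= K)%N. Proof. by case: (reserve_indexP _ _ x p admissible_K_gt0) => /andP[]. Qed.
Let rev_t : rev_at K x p t = M. Proof. by case: (reserve_indexP _ _ x p admissible_K_gt0). Qed.
Let q_lt1 : q < 1. Proof. by rewrite ltrBlDr ltrDl invr_gt0 (lt_trans ltr01). Qed.

Lemma cumul_total : G K.+1 = 1.
Proof. by case: adm. Qed.

Lemma cumul_le i j : (1 <= i)%N -> (i <= j <= K.+1)%N -> G i <= G j.
Proof.
case: adm => p_gt0 _ _ _ _ i_ge1 /andP[ij jK].
rewrite /cumul (big_cat_nat i_ge1 ij) /= lerDl big_nat_cond sumr_ge0 // => k.
move=> /andP[/andP[ik kj] _]; apply/ltW/p_gt0.
by rewrite (leq_trans i_ge1 ik) -ltnS (leq_trans kj jK).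
Qed.

Lemma cumul_ge0 i : (i <= K.+1)%N -> 0 <= G i.
Proof.
case: i => [|i] iK; first by rewrite /cumul big_geq.
have G1 : G 1%N = 0 by rewrite /cumul big_geq.
by rewrite -G1; apply: cumul_le.
Qed.

Lemma rev_atE k : (1 <= k <= K.+1)%N -> rev_at K x p k = x k * (1 - G k).
Proof.
case: adm => _ p_sum _ _ _ /andP[k_ge1 kK].
by rewrite /rev_at -p_sum (big_cat_nat k_ge1 kK) /= addrC addrK.
Qed.

Lemma admissible_x_le i j : (1 <= i)%N -> (i <= j <= K)%N -> x i <= x j.
Proof.
case: adm => _ _ _ x_lt _ i_ge1 /andP[ij jK].
move: jK; rewrite -(subnKC ij); elim: (j - i)%N => [|d IH]; rewrite ?addn0 // addnS => dK.
apply/(le_trans (IH (ltnW dK)))/ltW/x_lt.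
by rewrite (leq_trans i_ge1 (leq_addr _ _)).
Qed.

Lemma admissible_x_gt0 i : (1 <= i <= K)%N -> 0 < x i.
Proof.
case: adm => _ _ x1_gt0 _ _ /andP[i1 iK].
by apply: lt_le_trans x1_gt0 _; apply: admissible_x_le; rewrite ?i1.
Qed.

Lemma zcoef_ge0 i : (1 <= i <= K)%N -> 0 <= zcoef N p i.
Proof.
move=> /andP[i1 iK]; have iK1 : (i <= K.+1)%N := leqW iK.
rewrite zcoefE subr_ge0 lerXn2r ?nnegrE ?cumul_ge0 //.
by apply: cumul_le; rewrite ?i1 ?leqnSn.
Qed.

Lemma max_rev_gt0 : 0 < M.
Proof.
have K_gt0 := admissible_K_gt0.
apply: lt_le_trans (le_max_rev _ K x p 1%N _); last by rewrite K_gt0.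
by case: adm => _ p_sum x1_gt0 _ _; rewrite /rev_at p_sum mulr1.
Qed.

Lemma cumul_reserve_le : G t <= q.
Proof.
have K_gt0 := admissible_K_gt0.
have x1_le : x 1%N <= x t * (1 - G t).
  rewrite -rev_atE ?t_ge1 ?(leqW t_le) // rev_t.
  rewrite (le_trans _ (le_max_rev _ K x p 1%N _)) ?K_gt0 //.
  by rewrite rev_atE ?K_gt0 // /cumul big_geq // subr0 mulr1.
have xt_le : x t <= r * x 1%N.
  case: adm => _ _ _ _ xK; apply: le_trans xK.
  by apply: admissible_x_le; rewrite ?t_ge1 ?t_le ?leqnn.
have tail_ge0 : 0 <= 1 - G t.
  by rewrite subr_ge0 -cumul_total; apply: cumul_le; rewrite ?t_ge1 ?(leqW t_le) ?leqnn.
have x1_gt0 : 0 < x 1%N by case: adm.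
have : r^-1 * 1 <= 1 - G t by rewrite ler_pdivrMl ?(lt_trans ltr01 r_gt1) //; nra.
by rewrite mulr1; lra.
Qed.

Lemma head_welfare_le :
  \sum_(1 <= i < t) zcoef N p i * x i <= M * gamma_series N (G t).
Proof.
have Gt_lt1 : G t < 1 := le_lt_trans cumul_reserve_le q_lt1.
have G1 : G 1%N = 0 by rewrite /cumul big_geq.
have -> : gamma_series N (G t) =
    \sum_(1 <= i < t) (gamma_series N (G i.+1) - gamma_series N (G i)).
  by rewrite telescope_sumr // G1 gamma_series0 // subr0.
rewrite mulr_sumr; apply: ler_sum_nat => i /andP[i1 it].
have iK : (i <= K)%N := ltnW (leq_trans it t_le).
have Gi_ge0 : 0 <= G i by apply: cumul_ge0; rewrite ltnW.
have Gi_le : G i <= G i.+1 by apply: cumul_le; rewrite ?leqnSn.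
have Gi1_lt1 : G i.+1 < 1.
  by apply: le_lt_trans Gt_lt1; apply: cumul_le; rewrite ?it ?(leqW t_le).
have tail_gt0 : 0 < 1 - G i by rewrite subr_gt0 (le_lt_trans Gi_le).
have xi_le : x i <= M / (1 - G i).
  by rewrite ler_pdivlMr // -rev_atE ?i1 ?(leqW iK) // le_max_rev ?i1.
have zi_ge0 : 0 <= zcoef N p i by apply: zcoef_ge0; rewrite i1.
apply: le_trans (ler_wpM2l zi_ge0 xi_le) _.
rewrite mulrCA ler_wpM2l ?(ltW max_rev_gt0) // zcoefE.
exact: gamma_seriesB_ge.
Qed.

Lemma tail_welfare_ge :
  M * geosum N (G t) <= \sum_(t <= i < K.+1) zcoef N p i * x i.
Proof.
have -> : M * geosum N (G t) = \sum_(t <= i < K.+1) zcoef N p i * x t.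
  under eq_bigr do rewrite zcoefE.
  rewrite -mulr_suml telescope_sumr ?(leqW t_le) // cumul_total expr1n.
  by rewrite -geosum_mul_subr -rev_t rev_atE ?t_ge1 ?(leqW t_le) // [RHS]mulrC mulrA.
apply: ler_sum_nat => i /andP[ti iK].
rewrite ler_wpM2l ?zcoef_ge0 ?(leq_trans t_ge1 ti) //.
by apply: admissible_x_le; rewrite ?ti.
Qed.

Lemma ELR_le_gamma2 : ELR K N x p <= gamma2 r N / (geosum N q + gamma2 r N).
Proof.
have q_ge0 : 0 <= q by rewrite subr_ge0 invf_le1 ?ltW // (lt_trans ltr01).
have Gt_ge0 : 0 <= G t by apply: cumul_ge0; rewrite (leqW t_le).
have P_ge1 (v : R) : 0 <= v -> 1 <= geosum N v by exact: geosum_ge1.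
have L_ge0 : 0 <= \sum_(1 <= i < t) zcoef N p i * x i.
  rewrite big_nat_cond sumr_ge0 // => i /andP[/andP[i1 it] _].
  have i_in : (1 <= i <= K)%N by rewrite i1 (leq_trans (ltnW it) t_le).
  by rewrite mulr_ge0 ?zcoef_ge0 // ltW // admissible_x_gt0.
rewrite /ELR (big_cat_nat t_ge1 (leqW t_le)) /= [_ + gamma2 r N]addrC /gamma2.
apply: ler_ratio_add => //.
- apply: lt_le_trans tail_welfare_ge.
  by apply: mulr_gt0; [exact: max_rev_gt0 | exact: lt_le_trans ltr01 (P_ge1 _ Gt_ge0)].
- exact: gamma_series_ge0.
- exact: lt_le_trans ltr01 (P_ge1 _ q_ge0).
apply: le_trans (ler_wpM2r (le_trans ler01 (P_ge1 _ q_ge0)) head_welfare_le) _.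
rewrite -mulrA; apply: le_trans (ler_wpM2l (ltW max_rev_gt0)
  (gamma_series_geosum_le R N _ _ N_gt0 Gt_ge0 cumul_reserve_le q_lt1)) _.
rewrite mulrCA ler_wpM2l ?gamma_series_ge0 //; exact: tail_welfare_ge.
Qed.

End UpperBound.

Definition equal_revenue_prob {R : realType} (r : R) (K j : nat) : R :=
  if (j < K)%N then (1 - r^-1) / (K.-1)%:R else r^-1.

Definition equal_revenue_value {R : realType} (r : R) (K i : nat) : R :=
  (1 - cumul (equal_revenue_prob r K) i)^-1.

Section EqualRevenue.
Variables (R : realType) (r : R) (K N : nat).
Hypotheses (r_gt1 : 1 < r) (K_gt2 : (2 < K)%N) (N_gt0 : (0 < N)%N).

Local Notation q := (1 - r^-1).
Local Notation d := (q / (K.-1)%:R).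
Local Notation p := (equal_revenue_prob r K).
Local Notation x := (equal_revenue_value r K).

Let K_gt0 : (0 < K)%N. Proof. exact: ltn_trans K_gt2. Qed.
Let r_gt0 : 0 < r. Proof. exact: lt_trans ltr01 r_gt1. Qed.
Let q_gt0 : 0 < q. Proof. by rewrite subr_gt0 invf_lt1. Qed.
Let q_lt1 : q < 1. Proof. by rewrite ltrBlDr ltrDl invr_gt0. Qed.
Let d_gt0 : 0 < d. Proof. by rewrite divr_gt0 // ltr0n -ltnS prednK // ltnW. Qed.

Lemma cumul_equal_revenue i : (i <= K)%N -> cumul p i = (i.-1)%:R * d.
Proof.
move=> iK; rewrite /cumul big_nat_cond (eq_bigr (fun=> d)); last first.
  by move=> j /andP[/andP[_ ji] _]; rewrite /equal_revenue_prob (leq_trans ji iK).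
by rewrite -big_nat_cond sumr_const_nat mulr_natl subn1.
Qed.

Lemma cumul_equal_revenue_K : cumul p K = q.
Proof.
by rewrite cumul_equal_revenue // mulrC divfK // pnatr_eq0 -lt0n -ltnS prednK // ltnW.
Qed.

Lemma cumul_equal_revenue_total : cumul p K.+1 = 1.
Proof.
rewrite /cumul big_nat_recr //= -/(cumul p K) cumul_equal_revenue_K.
by rewrite /equal_revenue_prob ltnn subrK.
Qed.

Lemma cumul_equal_revenue_mono i j : (i <= j <= K)%N -> cumul p i <= cumul p j.
Proof.
move=> /andP[ij jK]; rewrite !cumul_equal_revenue ?(leq_trans ij jK) //.
by rewrite ler_pM2r // ler_nat -!subn1 leq_sub2r.
Qed.

Lemma cumul_equal_revenue_ge0 i : (i <= K)%N -> 0 <= cumul p i.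
Proof. by move=> iK; rewrite cumul_equal_revenue // mulr_ge0 // ltW. Qed.

Lemma equal_revenue_tail_gt0 i : (i <= K)%N -> 0 < 1 - cumul p i.
Proof.
move=> iK; rewrite subr_gt0 (le_lt_trans _ q_lt1) // -cumul_equal_revenue_K.
by rewrite cumul_equal_revenue_mono // iK leqnn.
Qed.

Lemma cumul_equal_revenue_step i : (0 < i < K)%N -> cumul p i.+1 - cumul p i = d.
Proof.
move=> /andP[i0 iK]; rewrite !cumul_equal_revenue ?(ltnW iK) //=.
by rewrite -[in i%:R](prednK i0) -natr1 mulrDl mul1r addrAC subrr add0r.
Qed.

Lemma cumul_equal_revenue_convex i : (0 < i < K)%N ->
  cumul p i - cumul p i.-1 <= cumul p i.+1 - cumul p i.
Proof.
move=> i_in; rewrite cumul_equal_revenue_step //.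
case: i i_in => [|[|i]] // i_in; first by rewrite /cumul !big_geq // subrr ltW.
by case/andP: i_in => _ iK; rewrite /= cumul_equal_revenue_step //= (ltnW iK).
Qed.

Lemma admissible_equal_revenue : admissible r K x p.
Proof.
have x1 : x 1%N = 1 by rewrite /equal_revenue_value /cumul big_geq // subr0 invr1.
split.
- by move=> i _; rewrite /equal_revenue_prob; case: ifP => _; rewrite ?invr_gt0.
- exact: cumul_equal_revenue_total.
- by rewrite x1.
- move=> i /andP[i1 iK].
  have tail_i := equal_revenue_tail_gt0 i (ltnW iK).
  have tail_Si := equal_revenue_tail_gt0 i.+1 iK.
  rewrite /equal_revenue_value ltf_pV2 ?posrE // ltrD2l ltrN2.
  rewrite !cumul_equal_revenue ?(ltnW iK) // ltr_pM2r // ltr_nat.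
  by case: i i1 {iK tail_i tail_Si}.
- rewrite x1 mulr1 /equal_revenue_value cumul_equal_revenue_K.
  by rewrite opprB addrC subrK invrK.
Qed.

Lemma rev_at_equal_revenue k : (1 <= k <= K)%N -> rev_at K x p k = 1.
Proof.
move=> /andP[k1 kK].
rewrite (rev_atE _ _ _ _ _ admissible_equal_revenue) ?k1 ?(leqW kK) //.
by rewrite /equal_revenue_value mulVf // gt_eqF // equal_revenue_tail_gt0.
Qed.

Lemma reserve_index_equal_revenue : reserve_index K x p = K.
Proof.
have [/andP[_ tK] _] := reserve_indexP _ _ x p K_gt0.
apply/eqP; rewrite eqn_leq tK leq_reserve_index ?K_gt0 ?leqnn //.
have [k k_in ->] := max_rev_attained _ _ x p K_gt0.
by rewrite !rev_at_equal_revenue // K_gt0 leqnn.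
Qed.

Lemma gamma1_equal_revenue : gamma1 r K N = gamma_series N (cumul p K.-1).
Proof.
rewrite /gamma1 cumul_equal_revenue ?leq_pred //; congr gamma_series.
case: K K_gt2 => [|[|[|k]]] // _ /=.
by field; rewrite -natrD pnatr_eq0 (gt_eqF r_gt0).
Qed.

Lemma last_welfare_equal_revenue : zcoef N p K * x K = geosum N q.
Proof.
have q_neq1 : 1 - q != 0 by rewrite subr_eq0 eq_sym lt_eqF.
rewrite zcoefE cumul_equal_revenue_total expr1n /equal_revenue_value cumul_equal_revenue_K.
by rewrite -geosum_mul_subr mulrC mulKf.
Qed.

Lemma head_welfare_equal_revenue_ge :
  gamma_series N (cumul p K.-1) <= \sum_(1 <= i < K) zcoef N p i * x i.
Proof.
have G0 : cumul p 0 = 0 by rewrite /cumul big_geq.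
have -> : gamma_series N (cumul p K.-1) =
    \sum_(1 <= i < K) (gamma_series N (cumul p i) - gamma_series N (cumul p i.-1)).
  by rewrite (telescope_sumr (fun i => gamma_series N (cumul p i.-1))) // G0 gamma_series0 ?subr0.
apply: ler_sum_nat => i /andP[i0 iK]; have iK' : (i <= K)%N := ltnW iK.
have Gi_lt1 : cumul p i < 1 by rewrite -subr_gt0 equal_revenue_tail_gt0.
have Gi1_ge0 : 0 <= cumul p i.-1 by rewrite cumul_equal_revenue_ge0 // (leq_trans (leq_pred i)).
have Gi1_le : cumul p i.-1 <= cumul p i by rewrite cumul_equal_revenue_mono // leq_pred.
apply: le_trans (gamma_seriesB_le R N _ _ N_gt0 Gi1_ge0 Gi1_le Gi_lt1) _.
have xi_ge0 : 0 <= x i by rewrite invr_ge0 ltW // equal_revenue_tail_gt0.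
rewrite zcoefE ler_wpM2r //; apply: subrXX_convex => //.
by apply: cumul_equal_revenue_convex; rewrite i0.
Qed.

Lemma ELR_equal_revenue_ge : gamma1 r K N / (geosum N q + gamma1 r K N) <= ELR K N x p.
Proof.
have q_ge0 : 0 <= q := ltW q_gt0.
have P_gt0 : 0 < geosum N q := lt_le_trans ltr01 (geosum_ge1 _ q N N_gt0 q_ge0).
have g1_ge0 : 0 <= gamma1 r K N.
  rewrite gamma1_equal_revenue gamma_series_ge0 ?cumul_equal_revenue_ge0 ?leq_pred //.
  by rewrite -subr_gt0 equal_revenue_tail_gt0 ?leq_pred.
have g1_le : gamma1 r K N <= \sum_(1 <= i < K) zcoef N p i * x i.
  by rewrite gamma1_equal_revenue; exact: head_welfare_equal_revenue_ge.
rewrite /ELR reserve_index_equal_revenue big_nat_recr //= last_welfare_equal_revenue.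
rewrite [geosum N q + _]addrC.
by apply: ler_ratio_add; rewrite ?ler_pM2r // (le_trans g1_ge0).
Qed.

End EqualRevenue.

Lemma geosum_one_sub_inv (R : realType) (r : R) N : r != 0 -> (0 < N)%N ->
  geosum N (1 - r^-1) = (r ^+ N - (r - 1) ^+ N) / r ^+ N.-1.
Proof.
move=> r_neq0 N_gt0; have := geosum_mul_subr _ (1 - r^-1) N.
rewrite subKr => /(canRL (mulKf (invr_neq0 r_neq0))) ->; rewrite invrK.
have -> : 1 - r^-1 = (r - 1) / r by field.
rewrite expr_div_n -(prednK N_gt0) /= !exprS.
have : r ^+ N.-1 != 0 by rewrite expf_neq0.
by set a := r ^+ N.-1; set b := (r - 1) ^+ N.-1 => a_neq0; field; rewrite a_neq0 r_neq0.
Qed.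

Theorem proposition8 (R : realType) (r : R) (K N : nat) :
  1 < r -> (1 <= N)%N -> (2 < K)%N ->
  let c := (r ^+ N - (r - 1) ^+ N) / r ^+ N.-1 in
  gamma1 r K N / (c + gamma1 r K N) <= eta_sup r K N /\
  eta_sup r K N <= gamma2 r N / (c + gamma2 r N).
Proof.
move=> r_gt1 N_gt0 K_gt2 c.
rewrite /c -geosum_one_sub_inv ?gt_eqF ?(lt_trans ltr01 r_gt1) //.
set x0 := equal_revenue_value r K; set p0 := equal_revenue_prob r K.
set E := [set e | exists x p : nat -> R, admissible r K x p /\ e = ELR K N x p]%classic.
set upper := gamma2 r N / (geosum N (1 - r^-1) + gamma2 r N).
have E_ub : ubound E upper by move=> _ [x [p [adm ->]]]; exact: ELR_le_gamma2.
have E_x0p0 : E (ELR K N x0 p0).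
  by exists x0, p0; split => //; exact: admissible_equal_revenue.
split; last by apply: ge_sup E_ub; exists (ELR K N x0 p0).
apply: le_trans (ELR_equal_revenue_ge _ _ _ _ r_gt1 K_gt2 N_gt0) _.
by apply: ub_le_sup E_x0p0; exists upper.
Qed.
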